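(* Let $k \geq 1$ and $m \geq 0$ be integers and put $n = 2k+m$. The number of Riordan paths of length $n$ having exactly $m$ flat steps and exactly $k$ up steps (and hence exactly $k$ down steps) equals $f^{(k,k,1^m)}$, the number of standard Young tableaux of shape $(k,k,1^m)$.
   Context: A Motzkin path of length $n$ is a lattice path from $(0,0)$ to $(n,0)$ using steps $U=(1,1)$, $F=(1,0)$ (flat), $D=(1,-1)$ that never goes below the $x$-axis. A Riordan path is a Motzkin path with no flat step $F$ on the $x$-axis (i.e. every $F$ is preceded by strictly more $U$'s than $D$'s). For a partition $\mu$, $f^\mu$ denotes the number of standard Young tableaux of shape $\mu$; $(k,k,1^m)$ is the partition with two parts equal to $k$ followed by $m$ parts equal to $1$. *)

From HB Require Import structures.
From mathcomp Require Import all_boot all_order all_algebra.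
Set Implicit Arguments. Unset Strict Implicit. Unset Printing Implicit Defensive.
Import GRing.Theory Num.Theory.

(* Steps of a Motzkin path: U = (1,1), F = (1,0), D = (1,-1). *)
Inductive step := U | F | D.

Definition step_to_ord (s : step) : 'I_3 :=
  match s with U => inord 0 | F => inord 1 | D => inord 2 end.
Definition ord_to_step (i : 'I_3) : step :=
  match val i with 0 => U | 1 => F | _ => D end.
Lemma stepK : cancel step_to_ord ord_to_step.
Proof. by case; rewrite /ord_to_step /= inordK. Qed.
HB.instance Definition _ := Finite.copy step (can_type stepK).

Definition dy (s : step) : int := match s with U => 1 | F => 0 | D => -1 end%R.

Definition height (w : seq step) : int := (\sum_(s <- w) dy s)%R.

Definition motzkin (w : seq step) : bool :=
  [forall i : 'I_(size w).+1, (0 <= height (take i w))%R] && (height w == 0%R).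

Definition riordan (w : seq step) : bool :=
  motzkin w &&
  [forall i : 'I_(size w), (nth U w i == F) ==> (0 < height (take i w))%R].

Definition riordan_paths (n k m : nat) : {set n.-tuple step} :=
  [set w : n.-tuple step | [&& riordan w, count_mem U w == k & count_mem F w == m]].

(* Young diagrams and standard Young tableaux.  A partition is given as the
   nonincreasing sequence of its (positive) parts.  Cells are pairs (r,c)
   (0-based) with r < size la and c < la_r. *)
Definition cell (la : seq nat) :=
  {x : 'I_(size la) * 'I_(head 0 la) | x.2 < nth 0 la x.1}.

(* A standard Young tableau of shape la: a bijection from the cells onto
   {0,...,|la|-1} (i.e. entries 1..|la| shifted by one) increasing along rows
   and down columns. *)
Definition is_syt (la : seq nat) (t : {ffun cell la -> 'I_(sumn la)}) : bool :=
  [&& injectiveb t,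
      [forall j : 'I_(sumn la), exists c : cell la, t c == j],
      [forall a : cell la, forall b : cell la,
          (((val a).1 == (val b).1) && ((val a).2 < (val b).2)) ==> (t a < t b)] &
      [forall a : cell la, forall b : cell la,
          (((val a).2 == (val b).2) && ((val a).1 < (val b).1)) ==> (t a < t b)]].

Definition num_syt (la : seq nat) : nat :=
  #|[set t : {ffun cell la -> 'I_(sumn la)} | is_syt t]|.

Definition hook2 (k m : nat) : seq nat := [:: k, k & nseq m 1].

From mathcomp Require Import all_boot all_order all_algebra zify.
Set Implicit Arguments. Unset Strict Implicit. Unset Printing Implicit Defensive.
Import GRing.Theory Num.Theory.

(* Record, for each entry j of a standard tableau of shape (k, k, 1^m), whether j lies
   in the first row (U), in the second row (D) or in the first column below them (F).
   This reading word determines the tableau, and the words arising this way are those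
   with k U's, k D's and m F's in which the c-th U precedes the c-th D and the first D
   precedes the first F: Motzkin paths all of whose flat steps come after a down step.
   Counting paths by their starting height h, a first-step induction shows that these
   are as many as the Riordan paths: such a path is an arbitrary Motzkin path after
   its first D, and the Motzkin paths from height h are as many as the Riordan paths
   from h together with the Riordan paths from h + 1 having one flat step fewer. *)

Lemma step_eqE (a b : step) :
  (a == b) = match a, b with U, U | F, F | D, D => true | _, _ => false end.
Proof. by case: a; case: b => //; apply/eqP. Qed.

Lemma forall_ord_iota n (P : pred nat) : [forall i : 'I_n, P i] = all P (iota 0 n).
Proof.
apply/forallP/allP => [H i | H i]; last by apply: H; rewrite mem_iota ltn_ord.
by rewrite mem_iota => /andP [_ lt_i_n]; exact: (H (Ordinal lt_i_n)).
Qed.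

Lemma all_iotaS n (P : pred nat) :
  all P (iota 0 n.+1) = P 0 && all (fun i => P i.+1) (iota 0 n).
Proof. by rewrite /= -[1]/(1 + 0) iotaDl all_map. Qed.

Fixpoint words n : seq (seq step) :=
  if n is n'.+1 then
    let ws := words n' in map (cons U) ws ++ map (cons F) ws ++ map (cons D) ws
  else [:: [::]].

Lemma mem_map_cons (t s : step) w ws :
  (s :: w \in map (cons t) ws) = (s == t) && (w \in ws).
Proof. by apply/mapP/andP => [[x xws [-> ->]] | [/eqP -> wws]]; [split | exists w]. Qed.

Lemma mem_words n w : (w \in words n) = (size w == n).
Proof.
elim: n w => [|n IH] [|s w] //=; rewrite !mem_cat.
  by apply/negP => /or3P [] /mapP [].
by rewrite !mem_map_cons IH eqSS; case: s; rewrite !step_eqE /= ?orbF.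
Qed.

Lemma uniq_words n : uniq (words n).
Proof.
have cons_inj (t : step) : injective (cons t) by move=> x y [].
elim: n => [|n IH] //=.
rewrite !cat_uniq !map_inj_uniq // IH /= !andbT has_cat negb_or.
by rewrite -!andbA; apply/and3P; split; apply/hasPn => _ /mapP [w _ ->];
  rewrite mem_map_cons step_eqE.
Qed.

Lemma card_tuple_words n (P : pred (seq step)) :
  #|[set w : n.-tuple step | P w]| = count P (words n).
Proof.
rewrite cardsE cardE /enum_mem size_filter -enumT.
have /permP -> : perm_eq (words n) (map val (enum {: n.-tuple step})).
  apply: uniq_perm; rewrite ?uniq_words ?(map_inj_uniq val_inj) ?enum_uniq //.
  move=> w; rewrite mem_words; apply/eqP/mapP => [sw | [v _ ->]]; last exact: size_tuple.
  by exists (Tuple (introT eqP sw)); rewrite ?mem_enum.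
by rewrite [RHS]count_map; congr count.
Qed.

Definition nwords (P : pred (seq step)) n k m :=
  count (fun w => [&& P w, count_mem U w == k & count_mem F w == m]) (words n).

Lemma nwords0 P k m : nwords P 0 k m = [&& P [::], k == 0 & m == 0].
Proof.
by rewrite /nwords /= addn0 ![0 == _]eq_sym; case: (P _) (k == 0) (m == 0) => [] [].
Qed.

Lemma nwordsS P n k m : nwords P n.+1 k m =
  (if k is k'.+1 then nwords (fun w => P (U :: w)) n k' m else 0) +
  (if m is m'.+1 then nwords (fun w => P (F :: w)) n k m' else 0) +
  nwords (fun w => P (D :: w)) n k m.
Proof.
rewrite /nwords /= !count_cat !count_map addnA.
have count_false (a : pred (seq step)) : a =1 pred0 -> count a (words n) = 0.
  by move=> a0; rewrite (eq_count a0) count_pred0.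
congr (_ + _ + _); [case: k => [|k] | case: m => [|m] | ];
  (apply: count_false || apply: eq_count) => w /=;
  by rewrite !step_eqE /= ?eqSS ?andbF.
Qed.

Lemma nwords_andl (b : bool) P n k m :
  nwords (fun w => b && P w) n k m = b * nwords P n k m.
Proof. by case: b; rewrite ?mul1n // mul0n /nwords count_pred0. Qed.

Lemma nwords_false n k m : nwords (fun _ => false) n k m = 0.
Proof. exact: count_pred0. Qed.

Lemma eq_nwords P Q n k m : P =1 Q -> nwords P n k m = nwords Q n k m.
Proof. by move=> eqPQ; apply: eq_count => w; rewrite eqPQ. Qed.

Lemma card_riordan_paths n k m : #|riordan_paths n k m| = nwords riordan n k m.
Proof.
exact: (card_tuple_words _ (fun w => [&& riordan w, count_mem U w == k & count_mem F w == m])).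
Qed.

Fixpoint riordan_from (h : nat) (w : seq step) : bool :=
  match w with
  | [::] => h == 0
  | U :: w' => riordan_from h.+1 w'
  | F :: w' => (0 < h) && riordan_from h w'
  | D :: w' => (0 < h) && riordan_from h.-1 w'
  end.

Fixpoint motzkin_from (h : nat) (w : seq step) : bool :=
  match w with
  | [::] => h == 0
  | U :: w' => motzkin_from h.+1 w'
  | F :: w' => motzkin_from h w'
  | D :: w' => (0 < h) && motzkin_from h.-1 w'
  end.

Fixpoint flats_after_down (h : nat) (w : seq step) : bool :=
  match w with
  | [::] => h == 0
  | U :: w' => flats_after_down h.+1 w'
  | F :: w' => false
  | D :: w' => (0 < h) && motzkin_from h.-1 w'
  end.

Lemma nwords_motzkin_from n h k m : nwords (motzkin_from h) n k m =
  (if m is m'.+1 then nwords (riordan_from h.+1) n k m' else 0) +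
  nwords (riordan_from h) n k m.
Proof.
elim: n h k m => [|n IH] h k m; first by rewrite !nwords0; case: m => //=; rewrite andbF.
rewrite !nwordsS /= !nwords_andl.
by case: k => [|k]; case: m => [|m]; rewrite ?nwordsS /= ?nwords_andl !IH;
  case: h => [|h] //=; try case: m => [|m]; rewrite /nwords /=; lia.
Qed.

Lemma nwords_flats_after_down n h k m :
  nwords (flats_after_down h) n k m = nwords (riordan_from h) n k m.
Proof.
elim: n h k m => [|n IH] h k m; first by rewrite !nwords0.
rewrite !nwordsS /= !nwords_andl.
by case: m => [|m]; case: h => [|h]; case: k => [|k];
  rewrite /= ?nwords_motzkin_from ?IH ?nwords_false /nwords /=; lia.
Qed.

Section Heights.

Local Open Scope ring_scope.

Lemma height_nil : height [::] = 0.
Proof. exact: big_nil. Qed.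

Lemma height_cons s w : height (s :: w) = dy s + height w.
Proof. exact: big_cons. Qed.

Lemma height_count w : height w = (count_mem U w)%:Z - (count_mem D w)%:Z.
Proof.
elim: w => [|s w IH]; first by rewrite height_nil.
by rewrite height_cons IH /=; case: s; rewrite !step_eqE /=; lia.
Qed.

Lemma motzkin_fromE (h : nat) w : motzkin_from h w =
  all (fun i => 0 <= h%:Z + height (take i w)) (iota 0 (size w).+1) &&
  (h%:Z + height w == 0).
Proof.
elim: w h => [|s w IH] h; first by rewrite /= height_nil addr0 andbT; case: h.
rewrite all_iotaS take0 height_nil addr0 [size _]/= height_cons addrA.
under eq_all => i do rewrite take_cons height_cons addrA.
case: s; rewrite [dy _]/= [motzkin_from _ _]/= le0z_nat.
- by rewrite -PoszD addn1 IH.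
- by rewrite addr0 IH.
case: h => [|h]; first by rewrite all_iotaS take0 height_nil.
by rewrite -predn_int // IH.
Qed.

Lemma riordan_fromE (h : nat) w : riordan_from h w = motzkin_from h w &&
  all (fun i => (nth U w i == F) ==> (0 < h%:Z + height (take i w))) (iota 0 (size w)).
Proof.
elim: w h => [|s w IH] h; first by rewrite andbT.
rewrite [size _]/= all_iotaS take0 height_nil addr0.
under eq_all => i do rewrite take_cons height_cons addrA.
case: s; rewrite [riordan_from _ _]/= [motzkin_from _ _]/= [dy _]/= [nth _ _ _]/= step_eqE /=.
- by rewrite (_ : h%:Z + 1 = h.+1) ?IH // -addn1 PoszD.
- by rewrite addr0 IH ltz_nat andbCA.
case: h => [//|h].
by rewrite -(predn_int (n := h.+1)) // IH andbA.
Qed.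

Lemma riordanE w : riordan w = riordan_from 0 w.
Proof.
rewrite riordan_fromE motzkin_fromE /riordan /motzkin -!forall_ord_iota add0r.
by congr (_ && _ && _); apply: eq_forallb => i; rewrite add0r.
Qed.

End Heights.

Lemma flats_after_downE h w : flats_after_down h w = motzkin_from h w &&
  all (fun i => (nth U w i == F) ==> (0 < count_mem D (take i w))) (iota 0 (size w)).
Proof.
elim: w h => [|s w IH] h; first by rewrite andbT.
rewrite [size _]/= all_iotaS take0.
under eq_all => i do rewrite take_cons [nth _ _ _]/= [count_mem _ _]/=.
case: s; rewrite [flats_after_down _ _]/= [motzkin_from _ _]/= !step_eqE /=.
- by rewrite IH.
- by rewrite andbF.
by rewrite [all _ _](_ : _ = true) ?andbT //; apply/allP => i _; rewrite implybT.
Qed.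

Section Occurrences.

Variable r : step.

Fixpoint positions (w : seq step) : seq nat :=
  if w is s :: w' then
    let ps := map succn (positions w') in if s == r then 0 :: ps else ps
  else [::].

(* The position of the c-th occurrence of [r] in [w], and 0 if there is none. *)
Definition occ (c : nat) (w : seq step) : nat := nth 0 (positions w) c.

Lemma size_positions w : size (positions w) = count_mem r w.
Proof. by elim: w => //= s w IH; case: (s == r); rewrite /= size_map IH. Qed.

Lemma mem_positions w j : (j \in positions w) = (j < size w) && (nth U w j == r).
Proof.
elim: w j => [|s w IH] j //=; case: (eqVneq s r) => [->|/negbTE s_r];
  case: j => [|j]; rewrite ?eqxx ?s_r /= ?inE ?(mem_map succn_inj) ?IH //.
by apply/mapP => -[].
Qed.

Lemma sorted_positions w : sorted ltn (positions w).
Proof.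
elim: w => //= s w IH; have IHS : sorted ltn (map succn (positions w)) by rewrite sorted_map.
by case: (s == r); rewrite //= path_min_sorted //; apply/allP => _ /mapP [j _ ->].
Qed.

Lemma count_take_succ w j :
  count_mem r (take j.+1 w) = ((j < size w) && (nth U w j == r)) + count_mem r (take j w).
Proof.
case: (ltnP j (size w)) => [lt_j_w | le_w_j]; last by rewrite !take_oversize ?(leq_trans le_w_j).
by rewrite (take_nth U lt_j_w) -cats1 count_cat /= addn0 addnC.
Qed.

Lemma count_take_le w j : count_mem r (take j w) <= count_mem r w.
Proof. by rewrite -{2}(cat_take_drop j w) count_cat leq_addr. Qed.

Lemma count_take_mono w : {homo (fun j => count_mem r (take j w)) : j j' / j <= j'}.
Proof.
move=> j j' le_jj'; rewrite -(take_takel w le_jj').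
by rewrite -{2}(cat_take_drop j (take j' w)) count_cat leq_addr.
Qed.

Lemma occP w c : c < count_mem r w ->
  [/\ occ c w < size w, nth U w (occ c w) = r & count_mem r (take (occ c w) w) = c].
Proof.
rewrite /occ; elim: w c => [|s w IH] c //=; have size_ps := size_positions w.
case: (eqVneq s r) => [->|/negbTE s_r]; rewrite /= ?eqxx ?s_r ?add0n ?add1n.
  case: c => [|c] //=; rewrite ltnS => lt_c_w.
  by rewrite (nth_map 0) ?size_ps //=; case: (IH _ lt_c_w) => ? -> ->; rewrite eqxx.
move=> lt_c_w; rewrite (nth_map 0) ?size_ps //=.
by case: (IH _ lt_c_w) => ? -> ->; rewrite s_r.
Qed.

Lemma occ_count_take w j : j < size w -> nth U w j = r ->
  occ (count_mem r (take j w)) w = j /\ count_mem r (take j w) < count_mem r w.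
Proof.
rewrite /occ; elim: w j => [|s w IH] [|j] //=; have size_ps := size_positions w.
  by move=> _ ->; rewrite eqxx.
rewrite ltnS => lt_j_w wj; case: (IH _ lt_j_w wj) => occ_j lt_cnt.
by case: (s == r); rewrite /= (nth_map 0) ?size_ps // occ_j.
Qed.

Lemma occ_ltE w c j : c < count_mem r w -> (occ c w < j) = (c < count_mem r (take j w)).
Proof.
case/occP => lt_occ w_occ cnt_occ; apply/idP/idP => [lt_occ_j | ].
  have := count_take_mono w lt_occ_j; rewrite count_take_succ lt_occ w_occ eqxx cnt_occ.
  by [].
move=> lt_c; rewrite ltnNge; apply/negP => /(count_take_mono w).
by rewrite cnt_occ leqNgt lt_c.
Qed.

Lemma occ_mono w c c' : c < c' -> c' < count_mem r w -> occ c w < occ c' w.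
Proof.
move=> lt_cc' lt_c'; rewrite occ_ltE; last exact: ltn_trans lt_cc' lt_c'.
by case: (occP lt_c') => _ _ ->.
Qed.

End Occurrences.

Lemma motzkin_from0E w : motzkin_from 0 w =
  all (fun i => count_mem D (take i w) <= count_mem U (take i w)) (iota 0 (size w).+1) &&
  (count_mem D w == count_mem U w).
Proof.
rewrite motzkin_fromE; congr andb; first apply: eq_all => i /=.
  by rewrite height_count add0r subr_ge0 lez_nat.
by rewrite height_count add0r subr_eq0 eqz_nat eq_sym.
Qed.

(* The column conditions of a tableau of shape (k, k, 1^m), read on its reading word. *)
Definition tableau_word (k m : nat) (w : seq step) : bool :=
  [&& count_mem U w == k, count_mem D w == k, count_mem F w == m,
      all (fun c => occ U c w < occ D c w) (iota 0 k) &
      (0 < m) ==> (occ D 0 w < occ F 0 w)].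

Lemma tableau_wordE k m w : 0 < k ->
  tableau_word k m w = [&& flats_after_down 0 w, count_mem U w == k & count_mem F w == m].
Proof.
move=> k_gt0; rewrite flats_after_downE motzkin_from0E /tableau_word.
apply/idP/idP.
- case/and5P => /eqP cU /eqP cD /eqP cF /allP U_before_D D_before_F.
  rewrite cU cD cF !eqxx !andbT; apply/andP; split.
    apply/allP => j _; case E: (count_mem D (take j w)) => [//|d].
    have lt_d_k : d < k by rewrite -cD -E count_take_le.
    have lt_occD_j : occ D d w < j by rewrite occ_ltE ?cD // E.
    have := U_before_D d; rewrite mem_iota lt_d_k => /(_ isT) lt_occU.
    by rewrite -occ_ltE ?cU // (ltn_trans lt_occU).
  apply/allP => j; rewrite mem_iota => /= lt_j_w; apply/implyP => /eqP wj.
  have F_upto_j := count_take_succ F w j; rewrite lt_j_w wj eqxx /= in F_upto_j.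
  have m_gt0 : 0 < m by rewrite -cF (leq_trans _ (count_take_le F w j.+1)) ?F_upto_j.
  have lt_occF : occ F 0 w < j.+1 by rewrite occ_ltE ?cF // F_upto_j.
  by rewrite -occ_ltE ?cD // (leq_trans (implyP D_before_F m_gt0)).
- case/andP => /andP [/andP [/allP ballot /eqP cDU] /allP flat_after_D] /andP [/eqP cU /eqP cF].
  rewrite cU in cDU; rewrite cU cDU cF !eqxx /=; apply/andP; split.
    apply/allP => c; rewrite mem_iota add0n => /= lt_c_k.
    have lt_c_D : c < count_mem D w by rewrite cDU.
    have [lt_occ w_occ cnt_occ] := occP lt_c_D.
    have := ballot (occ D c w).+1; rewrite mem_iota ltnS lt_occ => /(_ isT).
    rewrite !count_take_succ lt_occ w_occ cnt_occ !step_eqE /= => lt_c.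
    by rewrite occ_ltE ?cU.
  apply/implyP => m_gt0; have lt_0_F : 0 < count_mem F w by rewrite cF.
  have [lt_occ w_occ _] := occP lt_0_F.
  have := flat_after_D (occ F 0 w); rewrite mem_iota lt_occ w_occ eqxx => /(_ isT).
  by rewrite -occ_ltE ?cDU.
Qed.

Section HookCells.

Variables k m : nat.

Local Notation hcell := (cell (hook2 k m)).

Definition cell_row (x : hcell) : nat := (val x).1.
Definition cell_col (x : hcell) : nat := (val x).2.

Definition cell_step (x : hcell) : step :=
  if cell_row x == 0 then U else if cell_row x == 1 then D else F.

Definition cell_index (x : hcell) : nat :=
  if cell_row x <= 1 then cell_col x else cell_row x - 2.

Definition step_count (r : step) : nat := if r is F then m else k.

Definition step_coords (r : step) (i : nat) : nat * nat :=
  match r with U => (0, i) | D => (1, i) | F => (i.+2, 0) end.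

Lemma cell_bounds (x : hcell) :
  [/\ cell_row x < m.+2, cell_col x < k & 1 < cell_row x -> cell_col x = 0].
Proof.
case: x => [[r c] /= lt_c_r]; rewrite /cell_row /cell_col /=.
have lt_r : r < m.+2 by apply: (leq_trans (ltn_ord r)); rewrite /= size_nseq.
split => //.
case: (nat_of_ord r) lt_r lt_c_r => [|[|r']] //= _; rewrite nth_nseq; case: ifP; lia.
Qed.

Lemma cell_index_lt (x : hcell) : cell_index x < step_count (cell_step x).
Proof.
have [lt_row lt_col row_col] := cell_bounds x.
by rewrite /cell_index /cell_step; case: (cell_row x) lt_row row_col => [|[|r]] //=; lia.
Qed.

Lemma cell_same_rowE (a b : hcell) :
  ((val a).1 == (val b).1) && ((val a).2 < (val b).2) =
  [&& cell_step a == cell_step b, cell_step a != F & cell_index a < cell_index b].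
Proof.
have [_ _ a_col] := cell_bounds a; have [_ _ b_col] := cell_bounds b.
rewrite -/(cell_col a) -/(cell_col b) /cell_step /cell_index.
have -> : ((val a).1 == (val b).1) = (cell_row a == cell_row b) by [].
case: (cell_row a) a_col => [|[|ra]] a_col; case: (cell_row b) b_col => [|[|rb]] b_col;
  rewrite /= ?step_eqE ?andbF //=.
by rewrite a_col ?b_col ?andbF.
Qed.

Lemma cell_same_colE (a b : hcell) :
  ((val a).2 == (val b).2) && ((val a).1 < (val b).1) =
  [|| [&& cell_step a == U, cell_step b == D & cell_index a == cell_index b],
      [&& cell_step a == U, cell_index a == 0 & cell_step b == F],
      [&& cell_step a == D, cell_index a == 0 & cell_step b == F] |
      [&& cell_step a == F, cell_step b == F & cell_index a < cell_index b]].
Proof.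
have [_ _ a_col] := cell_bounds a; have [_ _ b_col] := cell_bounds b.
rewrite -/(cell_row a) -/(cell_row b) /cell_step /cell_index.
have -> : ((val a).2 == (val b).2) = (cell_col a == cell_col b) by [].
case: (cell_row a) a_col => [|[|ra]] a_col; case: (cell_row b) b_col => [|[|rb]] b_col;
  rewrite /= ?step_eqE /=; try rewrite (a_col isT); try rewrite (b_col isT);
  rewrite ?andbF ?orbF ?andbT //=; apply/idP/idP; lia.
Qed.

Variable x0 : hcell.

Definition cell_of (r : step) (i : nat) : hcell :=
  insubd x0 (insubd (val x0).1 (step_coords r i).1, insubd (val x0).2 (step_coords r i).2).

Lemma cell_of_coords r i : i < step_count r ->
  (cell_row (cell_of r i), cell_col (cell_of r i)) = step_coords r i.
Proof.
move=> lt_i; have [_ lt_col0 _] := cell_bounds x0.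
have row_ok : (step_coords r i).1 < size (hook2 k m).
  by rewrite [size _]/= size_nseq; case: (r) lt_i.
have col_ok : (step_coords r i).2 < k by case: (r) lt_i => //= _; lia.
have cell_ok : (step_coords r i).2 < nth 0 (hook2 k m) (step_coords r i).1.
  by case: (r) lt_i => //= lt_i; rewrite nth_nseq lt_i.
rewrite /cell_of /cell_row /cell_col val_insubd /= !val_insubd row_ok col_ok cell_ok /=.
by rewrite !val_insubd row_ok col_ok; case: (step_coords r i).
Qed.

Lemma cell_ofK r i : i < step_count r ->
  cell_step (cell_of r i) = r /\ cell_index (cell_of r i) = i.
Proof.
move/cell_of_coords; rewrite /cell_step /cell_index.
by case: r => -[-> ->] /=; split => //; lia.
Qed.

Lemma cell_stepK (x : hcell) : cell_of (cell_step x) (cell_index x) = x.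
Proof.
have [_ _ row_col] := cell_bounds x.
have := cell_of_coords (cell_index_lt x); move: (cell_of _ _) => y.
have -> : step_coords (cell_step x) (cell_index x) = (cell_row x, cell_col x).
  rewrite /cell_step /cell_index; case: (cell_row x) row_col => [|[|r]] //= -> //.
  by rewrite subn2.
case=> row_y col_y; apply/val_inj/injective_projections; exact/val_inj.
Qed.

End HookCells.

Lemma is_syt_props la (t : {ffun cell la -> 'I_(sumn la)}) : is_syt t ->
  [/\ injective t, forall j, exists c, t c = j,
      forall a b : cell la, ((val a).1 == (val b).1) && ((val a).2 < (val b).2) -> t a < t b &
      forall a b : cell la, ((val a).2 == (val b).2) && ((val a).1 < (val b).1) -> t a < t b].
Proof.
case/and4P => /injectiveP t_inj /forallP t_onto /forallP t_row /forallP t_col; split => //.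
- by move=> j; case/existsP: (t_onto j) => c /eqP; exists c.
- by move=> a b; move/forallP: (t_row a) => /(_ b) /implyP.
- by move=> a b; move/forallP: (t_col a) => /(_ b) /implyP.
Qed.

Section HookTableaux.

Variables (k m : nat) (x0 : cell (hook2 k m)) (j0 : 'I_(sumn (hook2 k m))).

(* [x0] and [j0] only serve as default values; [x0] also witnesses [0 < k]. *)
Local Notation hcell := (cell (hook2 k m)).
Local Notation N := (sumn (hook2 k m)).
Local Notation tableau := {ffun hcell -> 'I_N}.
Local Notation cell_of := (cell_of x0).

Lemma hook2_width_gt0 : 0 < k.
Proof. by have [_ /(leq_ltn_trans (leq0n _)) ->] := cell_bounds x0. Qed.

Definition letter (t : tableau) (j : 'I_N) : step :=
  if [pick c | t c == j] is Some c then cell_step c else U.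

Definition reading_word (t : tableau) : N.-tuple step := [tuple letter t j | j < N].

Lemma nth_reading_word (t : tableau) c j : injective t -> val (t c) = j ->
  nth U (reading_word t) j = cell_step c.
Proof.
move=> t_inj <-; rewrite nth_mktuple /letter.
by case: pickP => [c' /eqP /t_inj -> // | /(_ c)]; rewrite eqxx.
Qed.

Definition entry (t : tableau) (r : step) (i : nat) : nat := val (t (cell_of r i)).

Lemma entry_mono (t : tableau) r i j : is_syt t ->
  i < j -> j < step_count k m r -> entry t r i < entry t r j.
Proof.
case/is_syt_props => _ _ t_row t_col lt_ij lt_j.
have [ri ii] := cell_ofK x0 (ltn_trans lt_ij lt_j); have [rj ij] := cell_ofK x0 lt_j.
case: (eqVneq r F) => [r_F | r_nF].
  by apply: t_col; rewrite cell_same_colE ri rj ii ij r_F eqxx lt_ij !orbT.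
by apply: t_row; rewrite cell_same_rowE ri rj ii ij eqxx r_nF.
Qed.

Lemma positions_reading_word (t : tableau) r : is_syt t ->
  positions r (reading_word t) = map (entry t r) (iota 0 (step_count k m r)).
Proof.
move=> t_syt; have [t_inj t_onto _ _] := is_syt_props t_syt.
apply: (irr_sorted_eq ltn_trans ltnn (sorted_positions r _)).
  apply: (homo_sorted_in (P := gtn (step_count k m r))) (iota_ltn_sorted 0 _).
    by move=> i j _ lt_j lt_ij; apply: entry_mono.
  by apply/allP => i; rewrite mem_iota.
move=> j; rewrite mem_positions size_tuple; apply/andP/mapP => [[lt_j /eqP wj] | [i]].
  have [c tc] := t_onto (Ordinal lt_j).
  have := nth_reading_word t_inj (congr1 val tc); rewrite wj => c_r.
  exists (cell_index c); first by rewrite mem_iota /= c_r cell_index_lt.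
  by rewrite /entry c_r cell_stepK tc.
rewrite mem_iota /= => lt_i ->; have [ri _] := cell_ofK x0 lt_i.
by rewrite ltn_ord (nth_reading_word (c := cell_of r i)) // ri.
Qed.

Lemma count_reading_word (t : tableau) r : is_syt t ->
  count_mem r (reading_word t) = step_count k m r.
Proof.
by move=> t_syt; rewrite -size_positions positions_reading_word // size_map size_iota.
Qed.

Lemma occ_reading_word (t : tableau) r i : is_syt t -> i < step_count k m r ->
  occ r i (reading_word t) = entry t r i.
Proof.
by move=> t_syt lt_i; rewrite /occ positions_reading_word // (nth_map 0) ?size_iota // nth_iota.
Qed.

Lemma reading_word_tableau_word (t : tableau) : is_syt t -> tableau_word k m (reading_word t).
Proof.
move=> t_syt; have [_ _ _ t_col] := is_syt_props t_syt.
rewrite /tableau_word !count_reading_word // !eqxx /=; apply/andP; split.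
  apply/allP => c; rewrite mem_iota /= => lt_c; rewrite !occ_reading_word //.
  have [rU iU] := cell_ofK x0 (r := U) lt_c; have [rD iD] := cell_ofK x0 (r := D) lt_c.
  by apply: t_col; rewrite cell_same_colE rU rD iU iD !eqxx.
apply/implyP => m_gt0; rewrite !occ_reading_word // ?hook2_width_gt0 //.
have [rD iD] := cell_ofK x0 (r := D) hook2_width_gt0.
have [rF iF] := cell_ofK x0 (r := F) m_gt0.
by apply: t_col; rewrite cell_same_colE rD rF iD iF !eqxx !orbT.
Qed.

Lemma reading_word_inj (t1 t2 : tableau) : is_syt t1 -> is_syt t2 ->
  reading_word t1 = reading_word t2 -> t1 = t2.
Proof.
move=> t1_syt t2_syt e; apply/ffunP => x; apply: val_inj.
have := occ_reading_word t1_syt (cell_index_lt x).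
by rewrite e occ_reading_word ?cell_index_lt // /entry cell_stepK => <-.
Qed.

Definition word_tableau (w : seq step) : tableau :=
  [ffun x => insubd j0 (occ (cell_step x) (cell_index x) w)].

Section WordTableau.

Variable w : seq step.
Hypotheses (w_tab : tableau_word k m w) (size_w : size w = N).

Lemma tableau_word_count r : count_mem r w = step_count k m r.
Proof. by case/and5P: w_tab => /eqP ? /eqP ? /eqP ? _ _; case: r. Qed.

Lemma occ_cellP (x : hcell) :
  [/\ occ (cell_step x) (cell_index x) w < size w,
      nth U w (occ (cell_step x) (cell_index x) w) = cell_step x &
      count_mem (cell_step x) (take (occ (cell_step x) (cell_index x) w) w) = cell_index x].
Proof. by apply: occP; rewrite tableau_word_count cell_index_lt. Qed.

Lemma val_word_tableau x : val (word_tableau w x) = occ (cell_step x) (cell_index x) w.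
Proof.
have [lt_occ _ _] := occ_cellP x; rewrite size_w in lt_occ.
by rewrite ffunE val_insubd lt_occ.
Qed.

Lemma occ_step_mono r i j : i < j -> j < step_count k m r -> occ r i w < occ r j w.
Proof. by move=> lt_ij lt_j; apply: occ_mono; rewrite ?tableau_word_count. Qed.

Lemma word_tableau_onto (j : 'I_N) :
  exists2 x, word_tableau w x = j & cell_step x = nth U w j.
Proof.
have lt_j : j < size w by rewrite size_w.
have [occ_j lt_cnt] := occ_count_take lt_j (erefl (nth U w j)).
rewrite tableau_word_count in lt_cnt; have [step_x index_x] := cell_ofK x0 lt_cnt.
exists (cell_of (nth U w j) (count_mem (nth U w j) (take j w))) => //.
by apply: val_inj; rewrite val_word_tableau step_x index_x occ_j.
Qed.

Lemma word_tableau_col (a b : hcell) :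
  ((val a).2 == (val b).2) && ((val a).1 < (val b).1) -> word_tableau w a < word_tableau w b.
Proof.
case/and5P: w_tab => _ _ _ /allP U_before_D D_before_F.
have lt_b := cell_index_lt b.
have D_before_Fi i : i < m -> occ D 0 w < occ F i w.
  move=> lt_i; have m_gt0 : 0 < m by apply: leq_ltn_trans lt_i.
  apply: leq_trans (implyP D_before_F m_gt0) _.
  by case: i lt_i => [//|i] lt_i; apply/ltnW/occ_step_mono.
have U_before_D0 : occ U 0 w < occ D 0 w by apply: U_before_D; rewrite mem_iota hook2_width_gt0.
rewrite cell_same_colE !val_word_tableau.
case/or4P => [/and3P [/eqP -> /eqP rb /eqP ->] | /and3P [/eqP -> /eqP -> /eqP rb]
              | /and3P [/eqP -> /eqP -> /eqP rb] | /and3P [/eqP -> /eqP rb lt_ab]];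
  rewrite rb /= in lt_b *.
- by apply: U_before_D; rewrite mem_iota lt_b.
- exact: ltn_trans U_before_D0 (D_before_Fi _ lt_b).
- exact: D_before_Fi.
- exact: occ_step_mono.
Qed.

Lemma word_tableau_syt : is_syt (word_tableau w).
Proof.
apply/and4P; split.
- apply/injectiveP => x y /(congr1 val); rewrite !val_word_tableau => e.
  have [_ wx cx] := occ_cellP x; have [_ wy cy] := occ_cellP y.
  have step_xy : cell_step x = cell_step y by rewrite -wx -wy e.
  have index_xy : cell_index x = cell_index y by rewrite -cx -cy e step_xy.
  by rewrite -(cell_stepK x0 x) -(cell_stepK x0 y) step_xy index_xy.
- by apply/forallP => j; apply/existsP; have [x /eqP] := word_tableau_onto j; exists x.
- apply/forallP => a; apply/forallP => b; apply/implyP.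
  rewrite cell_same_rowE !val_word_tableau => /and3P [/eqP -> _ lt_ab].
  exact: occ_step_mono (cell_index_lt b).
- by do 2!apply/forallP => ?; apply/implyP/word_tableau_col.
Qed.

Lemma word_tableauK : val (reading_word (word_tableau w)) = w.
Proof.
have [t_inj _ _ _] := is_syt_props word_tableau_syt.
apply: (@eq_from_nth _ U); rewrite size_tuple // => j lt_j.
have [x tx <-] := word_tableau_onto (Ordinal lt_j).
exact: nth_reading_word (congr1 val tx).
Qed.

End WordTableau.

Lemma card_syt_tableau_words :
  num_syt (hook2 k m) = #|[set w : N.-tuple step | tableau_word k m w]|.
Proof.
have inj : {in [set t : tableau | is_syt t] &, injective reading_word}.
  by move=> t1 t2; rewrite !inE; apply: reading_word_inj.
rewrite /num_syt -(card_in_imset inj); apply: eq_card => w; rewrite inE.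
apply/imsetP/idP => [[t] | w_tab]; first by rewrite inE => /reading_word_tableau_word ? ->.
exists (word_tableau w); first by rewrite inE word_tableau_syt ?size_tuple.
by apply: val_inj; rewrite word_tableauK ?size_tuple.
Qed.

End HookTableaux.

Lemma sumn_hook2 k m : sumn (hook2 k m) = 2 * k + m.
Proof. by rewrite /= sumn_nseq mul1n; lia. Qed.

Theorem proposition1p2 (k m : nat) : 1 <= k ->
  #|riordan_paths (2 * k + m) k m| = num_syt (hook2 k m).
Proof.
case: k => [//|k] _.
pose x0 : cell (hook2 k.+1 m) :=
  exist _ (Ordinal (isT : 0 < size (hook2 k.+1 m)), Ordinal (isT : 0 < k.+1)) isT.
pose j0 : 'I_(sumn (hook2 k.+1 m)) := Ordinal (isT : 0 < sumn (hook2 k.+1 m)).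
rewrite card_riordan_paths (eq_nwords _ _ _ riordanE) -nwords_flats_after_down.
rewrite (card_syt_tableau_words x0 j0) sumn_hook2 card_tuple_words.
by apply: eq_count => w; rewrite tableau_wordE.
Qed.
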